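(* Let $G$ be a connected cubic circulant graph with edge ideal $I(G)\subseteq\Bbbk[x_1,\ldots,x_{2n}]$, let $t\ge1$, and let $\mathbf a\in\mathbb N^{2n}$ be an exponent such that $x^{\mathbf a}\notin I(G)^{(t)}$. Then $$\sqrt{I(G)^t:x^{\mathbf a}}=\sqrt{I(G)^{(t)}:x^{\mathbf a}}.$$
   Context: A cubic circulant graph is $C_{2n}(a,n)$ for integers $1\le a<n$: the simple graph on $[2n]$ in which distinct $i,j$ are adjacent iff $|i-j|\in\{a,n,2n-a\}$. $I(G)=(x_ix_j\mid\{i,j\}\in E(G))$, and $x^{\mathbf a}=x_1^{a_1}\cdots x_{2n}^{a_{2n}}$. For a squarefree monomial ideal $I=P_1\cap\cdots\cap P_r$ (minimal primary decomposition), $I^{(t)}=P_1^t\cap\cdots\cap P_r^t$. *)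

From mathcomp Require Import all_boot all_order all_algebra.
From mathcomp Require Import mpoly.
Set Implicit Arguments. Unset Strict Implicit. Unset Printing Implicit Defensive.
Import GRing.Theory.
Local Open Scope ring_scope.

(* Vertices of C_{2n}(a,n): the ordinals 'I_(2n) (vertex i <-> paper's i+1). *)
Definition natdist (i j : nat) : nat := if (i <= j)%N then (j - i)%N else (i - j)%N.

Definition circ_adj (n a : nat) : rel 'I_(2 * n) :=
  fun i j => (i != j) &&
    [|| natdist i j == a, natdist i j == n | natdist i j == (2 * n - a)%N].

Arguments circ_adj : clear implicits.

Definition graph_connected (T : finType) (e : rel T) : Prop :=
  forall x y : T, connect e x y.

Section Ideals.
Variable R : comNzRingType.

Definition gen_ideal (S : R -> Prop) : R -> Prop :=
  fun f => exists r : seq (R * R),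
    (forall p, p \in r -> S p.2) /\ f = \sum_(p <- r) p.1 * p.2.

Definition ideal_pow (I : R -> Prop) (t : nat) : R -> Prop :=
  gen_ideal (fun f => exists s : seq R,
    size s = t /\ (forall g, g \in s -> I g) /\ f = \prod_(g <- s) g).

Definition ideal_colon (I : R -> Prop) (g : R) : R -> Prop := fun f => I (f * g).

Definition ideal_rad (I : R -> Prop) : R -> Prop := fun f => exists m : nat, I (f ^+ m).

Definition is_ideal (P : R -> Prop) : Prop :=
  P 0 /\ (forall f g, P f -> P g -> P (f + g)) /\ (forall c f, P f -> P (c * f)).

Definition is_prime_ideal (P : R -> Prop) : Prop :=
  is_ideal P /\ ~ P 1 /\ (forall f g, P (f * g) -> P f \/ P g).

Definition minimal_prime (I P : R -> Prop) : Prop :=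
  is_prime_ideal P /\ (forall f, I f -> P f) /\
  (forall Q, is_prime_ideal Q -> (forall f, I f -> Q f) -> (forall f, Q f -> P f) ->
     forall f, P f -> Q f).

(* Symbolic power of a squarefree monomial (radical) ideal I = P_1 \cap ... \cap P_r,
   the P_i being its minimal primes:  I^(t) = P_1^t \cap ... \cap P_r^t. *)
Definition symb_pow (I : R -> Prop) (t : nat) : R -> Prop :=
  fun f => forall P, minimal_prime I P -> ideal_pow P t f.

End Ideals.

Definition edge_ideal_circ (k : fieldType) (n a : nat) : {mpoly k[2 * n]} -> Prop :=
  @gen_ideal {mpoly k[2 * n]} (fun f => exists i j : 'I_(2 * n), circ_adj n a i j /\ f = 'X_i * 'X_j).

Notation expvec N := ('X_{1.. N}) (only parsing).
Arguments edge_ideal_circ : clear implicits.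

(* The minimal primes of the edge ideal [I] are the ideals [P_C] generated by the
   variables of the minimal vertex covers [C].  If [f^M x^m] lies in every [P_C^t], then
   comparing [C]-degrees (the [T]-adic valuation after [x_i |-> T x_i] for [i] in [C])
   shows that each monomial [x^u] of [f] uses a variable of every cover [C] of
   [m]-weight [m(C) < t]; such a cover exists because [x^m] is not in [I^(t)].
   It then suffices to find [t] edges meeting each vertex [i] at most
   [m_i + t [u_i > 0]] times, for their product divides [(x^u)^t x^m].  If the support
   [F] of [u] contains an edge, take it [t] times.  Otherwise, for [v] in [F], the graph
   without the closed neighbourhood of [v] is bipartite (for a connected cubic circulant,
   the parity of [p + e] in [x = v + a p + e n] is a 2-colouring), and so is the graph
   without [F] and its neighbourhood [N(F)].  The weighted König theorem there, together
   with [m_y] copies of an edge from each [y] in [N(F)] into [F], gives a b-matching at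
   least as large as the weight of a cover avoiding [F], which is at least [t]. *)

(* [mpoly] comes first so that its [symmetric] does not shadow the one of [ssrbool]. *)
From mathcomp Require Import mpoly.
From mathcomp Require Import all_boot all_order all_algebra.
From mathcomp Require Import zify ring boolp.
Set Implicit Arguments. Unset Strict Implicit. Unset Printing Implicit Defensive.
Import GRing.Theory.

(** * b-matchings and the weighted König theorem *)

Section EdgeLists.
Variable V : eqType.
Implicit Types (u v : V) (p : V * V) (L : seq (V * V)).

Definition degree v L : nat :=
  count (fun p => p.1 == v) L + count (fun p => p.2 == v) L.

Lemma degree_cat v L1 L2 : degree v (L1 ++ L2) = degree v L1 + degree v L2.
Proof. by rewrite /degree !count_cat addnACA. Qed.

Lemma degree_cons v p L : degree v (p :: L) = (p.1 == v) + (p.2 == v) + degree v L.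
Proof. by rewrite /degree /= addnACA. Qed.

Lemma degree_nseq v k p : degree v (nseq k p) = ((p.1 == v) + (p.2 == v)) * k.
Proof. by rewrite /degree !count_nseq mulnDl. Qed.

Lemma degree_take v t L : degree v (take t L) <= degree v L.
Proof. by rewrite -{2}(cat_take_drop t L) degree_cat leq_addr. Qed.

Lemma degree_le_size v L : all (fun p => p.1 != p.2) L -> degree v L <= size L.
Proof.
elim: L => [|p L IH] //= /andP [p12 /IH]; rewrite degree_cons.
have : (p.1 == v) + (p.2 == v) <= 1.
  by case: eqP => [e1|]; case: eqP => [e2|] //=; move: p12; rewrite e1 e2 eqxx.
lia.
Qed.

Lemma degree_eq0 v L : all (fun p => (p.1 != v) && (p.2 != v)) L -> degree v L = 0.
Proof.
elim: L => [|p L IH] //= /andP [/andP [/negbTE p1 /negbTE p2] /IH].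
by rewrite degree_cons p1 p2.
Qed.

End EdgeLists.

Section Konig.
Variable V : finType.
Implicit Types (E : rel V) (w : V -> nat) (side : V -> bool) (A B C D U : {set V}).

Definition bmatching E w (L : seq (V * V)) : Prop :=
  all (fun p => E p.1 p.2) L /\ forall v, degree v L <= w v.

Lemma bmatchingW E w w' L : bmatching E w L -> (forall v, w v <= w' v) -> bmatching E w' L.
Proof. by move=> [edges deg] le_w; split=> // v; apply: leq_trans (deg v) (le_w v). Qed.

Definition weight w A : nat := \sum_(v in A) w v.

Lemma weightID w A B : weight w A = weight w (A :&: B) + weight w (A :\: B).
Proof. exact: big_setID. Qed.

Lemma weight_subset w A B : A \subset B -> weight w A <= weight w B.
Proof. by move=> /setIidPr AB; rewrite (weightID w B A) AB leq_addr. Qed.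

Lemma weightU w A B : weight w (A :|: B) <= weight w A + weight w B.
Proof.
rewrite (weightID w _ A) setUK leq_add2l weight_subset //.
by rewrite setDUl setDv set0U subsetDl.
Qed.

Lemma weightD1 w A v : v \in A -> weight w A = w v + weight w (A :\ v).
Proof. exact: big_setD1. Qed.

Lemma weight_gt0 w A v : v \in A -> 0 < w v -> 0 < weight w A.
Proof. by move=> vA wv; rewrite (weightD1 w vA) ltn_addr. Qed.

Lemma weight_restrict w U A : weight (fun v => (v \in U) * w v) A = weight w (A :&: U).
Proof.
rewrite /weight big_mkcond [RHS]big_mkcond /=; apply: eq_bigr => v _.
by rewrite in_setI; case: (v \in A); case: (v \in U); rewrite ?mul1n.
Qed.

Definition is_cover E C : bool := [forall x, forall y, E x y ==> (x \in C) || (y \in C)].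

Lemma coverP E C : reflect (forall x y, E x y -> (x \in C) || (y \in C)) (is_cover E C).
Proof.
apply: (iffP forallP) => [cov x y Exy | cov x]; last first.
  by apply/forallP => y; apply/implyP; apply: cov.
by have /forallP/(_ y)/implyP := cov x; apply.
Qed.

Definition bipartite side E : Prop := forall x y, E x y -> side x != side y.

Definition induced E U : rel V := fun x y => [&& E x y, x \in U & y \in U].

Lemma bipartite_induced side E U : bipartite side E -> bipartite side (induced E U).
Proof. by move=> bip x y /and3P [/bip]. Qed.

Lemma bipartite_subset side E A B :
  B \subset A -> bipartite side (induced E A) -> bipartite side (induced E B).
Proof.
by move=> /subsetP BA bip x y /and3P [Exy /BA xA /BA yA]; apply: bip; apply/and3P.
Qed.

Definition cover_le_matching E w : Prop :=
  exists L C, [/\ bmatching E w L, is_cover E C & weight w C <= size L].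

Definition agreement side C := [set v | side v == (v \in C)].

Lemma agreementC side C : ~: agreement side C = agreement (fun v => ~~ side v) C.
Proof. by apply/setP => v; rewrite !inE; case: (side v); case: (v \in C). Qed.

Lemma min_cover_induced E w C U D :
  (forall D, is_cover E D -> weight w C <= weight w D) ->
  (forall x y, E x y -> x \notin C :\: U -> y \notin C :\: U -> (x \in U) && (y \in U)) ->
  is_cover (induced E U) D -> weight w (C :&: U) <= weight w (D :&: U).
Proof.
move=> minC inU /coverP covD.
have covK : is_cover E ((D :&: U) :|: (C :\: U)).
  apply/coverP => x y Exy; rewrite !inE.
  case: (boolP (x \in C :\: U)) => [/setDP [-> ->]|xCU]; rewrite ?orbT //.
  case: (boolP (y \in C :\: U)) => [/setDP [-> ->]|yCU]; rewrite ?orbT //.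
  have /andP [xU yU] := inU x y Exy xCU yCU.
  by have := covD x y; rewrite /induced Exy xU yU => /(_ isT) /orP [] ->; rewrite ?orbT.
have := leq_trans (minC _ covK) (weightU _ _ _).
by rewrite (weightID w C U) leq_add2r.
Qed.

Lemma agreement_edges side E C x y : bipartite side E -> is_cover E C -> E x y ->
  x \notin C :\: agreement side C -> y \notin C :\: agreement side C ->
  (x \in agreement side C) && (y \in agreement side C).
Proof.
move=> bip /coverP cov Exy; move: (bip x y Exy) (cov x y Exy); rewrite !inE.
by case: (side x); case: (side y); case: (x \in C); case: (y \in C).
Qed.

Lemma konig_split side E w C : bipartite side E -> is_cover E C ->
  (forall D, is_cover E D -> weight w C <= weight w D) ->
  let U := agreement side C in
  cover_le_matching (induced E U) (fun v => (v \in U) * w v) ->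
  cover_le_matching (induced E (~: U)) (fun v => (v \in ~: U) * w v) ->
  cover_le_matching E w.
Proof.
move=> bip covC minC U [L1 [D1 [[edL1 degL1] covD1 szL1]]] [L2 [D2 [[edL2 degL2] covD2 szL2]]].
have bipN : bipartite (fun v => ~~ side v) E by move=> x y /bip; rewrite (inj_eq negb_inj).
have halfU := min_cover_induced minC (fun x y => agreement_edges bip covC) covD1.
have edgesN x y : E x y -> x \notin C :\: ~: U -> y \notin C :\: ~: U ->
    (x \in ~: U) && (y \in ~: U).
  by rewrite /U agreementC; apply: agreement_edges bipN covC.
have halfN := min_cover_induced minC edgesN covD2.
exists (L1 ++ L2), C; split => //.
- split; first by rewrite all_cat (sub_all _ edL1) ?(sub_all _ edL2) // => p /and3P [].
  move=> v; rewrite degree_cat; move: (degL1 v) (degL2 v); rewrite in_setC.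
  by case: (v \in U); rewrite ?mul0n ?mul1n; lia.
- rewrite size_cat (weightID w C U) setDE.
  apply: leq_add; [apply: leq_trans halfU _ | apply: leq_trans halfN _];
    by rewrite -weight_restrict.
Qed.

Lemma weight_decr w x y A : x != y -> 0 < w x -> 0 < w y ->
  weight w A = weight (fun v => w v - (v == x) - (v == y)) A + (x \in A) + (y \in A).
Proof.
move=> xy wx wy.
have indicator z : \sum_(v in A) (v == z) = (z \in A).
  case: (boolP (z \in A)) => zA; last first.
    by rewrite big1 // => v vA; case: eqP vA => // ->; rewrite (negbTE zA).
  by rewrite (bigD1 z) //= eqxx big1 // => v /andP [_ /negbTE ->].
rewrite -!indicator /weight -!big_split /=; apply: eq_bigr => v _.
case: (eqVneq v x) => [->|_]; first by rewrite (negbTE xy); lia.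
by case: (eqVneq v y) => [->|_]; lia.
Qed.

Lemma konig_edge side E w C x y : bipartite side E -> is_cover E C ->
  (forall D, is_cover E D -> weight w C <= weight w D) ->
  (forall D, is_cover E D -> weight w D = weight w C ->
     (weight w (agreement side D) == 0) || (weight w (~: agreement side D) == 0)) ->
  E x y -> 0 < w x -> 0 < w y ->
  cover_le_matching E (fun v => w v - (v == x) - (v == y)) ->
  cover_le_matching E w.
Proof.
move=> bip covC minC nosplit Exy wx wy [L [D [[edL degL] covD szD]]].
have xy : x != y by apply: contraNneq (bip x y Exy) => ->.
have wD := weight_decr D xy wx wy.
have matching : bmatching E w ((x, y) :: L).
  split=> [|v]; first by rewrite /= Exy.
  have := weight_decr [set v] xy wx wy; rewrite /weight !big_set1 !inE.
  by rewrite degree_cons /=; have := degL v; lia.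
have [/andP [xD yD]|nxy] := boolP ((x \in D) && (y \in D)); last first.
  exists ((x, y) :: L), D; split => //=.
  by move: nxy wD; case: (x \in D); case: (y \in D) => //= _; lia.
exists ((x, y) :: L), C; split => //=.
have [eqD|] := eqVneq (weight w D) (weight w C); last first.
  by move=> neD; have := minC D covD; move: neD wD; rewrite xD yD /=; lia.
have agrE v : v \in D -> (v \in agreement side D) = side v by move=> vD; rewrite inE vD eqb_id.
have absent A v : weight w A = 0 -> 0 < w v -> v \notin A.
  by move=> A0 wv; apply/negP => /weight_gt0 /(_ wv); rewrite A0.
have := bip x y Exy; rewrite -(agrE x xD) -(agrE y yD).
case/orP: (nosplit D covD eqD) => /eqP A0.
  by rewrite (negbTE (absent _ _ A0 wx)) (negbTE (absent _ _ A0 wy)).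
by move: (absent _ _ A0 wx) (absent _ _ A0 wy); rewrite !in_setC !negbK => -> ->.
Qed.

Lemma konig_trivial E w :
  ~~ [exists x, exists y, [&& E x y, 0 < w x & 0 < w y]] -> cover_le_matching E w.
Proof.
move=> nopos; exists [::], [set v | w v == 0]; split => //.
- apply/coverP => x y Exy; rewrite !inE; apply: contraNT nopos.
  rewrite negb_or => /andP [wx wy]; apply/existsP; exists x; apply/existsP; exists y.
  by rewrite Exy !lt0n wx wy.
- by rewrite /weight big1 // => v; rewrite inE => /eqP.
Qed.

(* Induction on the total weight.  If some minimum cover [C] leaves positive weight on
   both [agreement side C] and its complement, no edge joins [C]-vertices of one to
   non-[C]-vertices of the other, so the two induced subproblems combine.  Otherwise
   match an edge [xy] of positive weights and decrease [w] at [x] and [y]: a cover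
   containing both [x] and [y] that stays minimum for [w] would be such a split cover. *)
Theorem bipartite_konig side E w : bipartite side E -> cover_le_matching E w.
Proof.
move: {2}(weight w setT) (leqnn (weight w setT)) => s.
elim: s E w => [|s IH] E w le_ws bip.
  apply: konig_trivial; apply/existsP => -[x /existsP [y /and3P [_ wx _]]].
  by have := weight_gt0 (in_setT x) wx; lia.
have [|C covC minC] := @arg_minnP _ setT (is_cover E) (weight w).
  by apply/coverP => x y _; rewrite inE.
have [/existsP [D /and4P [covD /eqP eqD posU posN]]|nosplit] := boolP [exists D,
    [&& is_cover E D, weight w D == weight w C, 0 < weight w (agreement side D)
      & 0 < weight w (~: agreement side D)]].
  have recurse U : 0 < weight w (~: U) ->
      cover_le_matching (induced E U) (fun v => (v \in U) * w v).
    move=> posC; apply: IH; last exact: bipartite_induced.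
    by rewrite weight_restrict setTI; move: le_ws; rewrite (weightID w setT U) setTI setTD; lia.
  apply: (konig_split bip covD) => [D' /minC||]; first by rewrite eqD.
    exact: recurse.
  by apply: recurse; rewrite setCK.
have [/existsP [x /existsP [y /and3P [Exy wx wy]]]|] := boolP
    [exists x, exists y, [&& E x y, 0 < w x & 0 < w y]]; last exact: konig_trivial.
apply: (konig_edge bip covC minC _ Exy wx wy).
  move=> D covD eqD; apply: contraNT nosplit; rewrite negb_or => /andP [posU posN].
  by apply/existsP; exists D; rewrite covD eqD eqxx !lt0n posU posN.
have xy : x != y by apply: contraNneq (bip x y Exy) => ->.
by apply: IH => //; move: le_ws; rewrite (weight_decr setT xy wx wy) !in_setT; lia.
Qed.

End Konig.

Section LargeBMatching.
Variable V : finType.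
Variable adj : rel V.
Hypotheses (adj_sym : symmetric adj) (adj_irr : irreflexive adj).
Implicit Types (F A C : {set V}) (m : V -> nat).

Definition closed_nbhd (v : V) : {set V} := [set x | (x == v) || adj v x].

Lemma adj_neq x y : adj x y -> x != y.
Proof. by apply: contraTneq => ->; rewrite adj_irr. Qed.

Lemma star_bmatching m F A : (forall y, y \in A -> exists2 x, x \in F & adj y x) ->
  exists L, [/\ size L = weight m A, all (fun p => adj p.1 p.2) L &
                forall u, u \notin F -> degree u L = (u \in A) * m u].
Proof.
move=> hasF; pose nb y := odflt y [pick x in F | adj y x].
have nbP y : y \in A -> (nb y \in F) && adj y (nb y).
  move=> /hasF [x xF yx]; rewrite /nb; case: pickP => [z /andP [-> ->] //|/(_ x)].
  by rewrite xF yx.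
pose star s := flatten [seq nseq (m y) (y, nb y) | y <- s].
exists (star (enum A)); split.
- rewrite /weight -big_enum /=; elim: (enum A) => [|y s IH]; first by rewrite big_nil.
  by rewrite big_cons /= size_cat size_nseq IH.
- apply/allP => p /flatten_mapP [y]; rewrite mem_enum => /nbP /andP [_ ynb].
  by move=> /nseqP [-> _].
move=> u uF; have nbu y : y \in enum A -> (nb y == u) = false.
  by rewrite mem_enum => /nbP /andP [nbF _]; apply: contraNF uF => /eqP <-.
rewrite -mem_enum -(count_uniq_mem u (enum_uniq (mem A))).
elim: (enum A) nbu => [|y s IH] nbu //=.
rewrite degree_cat degree_nseq /= nbu ?mem_head // addn0 IH => [|z zs]; last first.
  by apply: nbu; rewrite inE zs orbT.
by rewrite mulnDl; case: eqP => [->|]; rewrite ?mul0n.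
Qed.

Definition outer_nbhd F : {set V} := [set y | (y \notin F) && [exists x in F, adj x y]].

Lemma outer_nbhd_cover F CH : {in F &, forall x y, ~~ adj x y} ->
  is_cover (induced adj (~: (F :|: outer_nbhd F))) CH ->
  is_cover adj (outer_nbhd F :|: (CH :\: F)).
Proof.
move=> indep /coverP covH; apply/coverP => x y xy.
have inN z z' : z \in F -> adj z z' -> z' \in outer_nbhd F.
  move=> zF zz'; rewrite inE; apply/andP; split; last by apply/exists_inP; exists z.
  by apply: contraL zz' => /(indep _ _ zF).
rewrite !in_setU !in_setD.
case: (boolP (x \in F)) => [xF|xnF]; first by rewrite (inN x y xF xy) orbT.
case: (boolP (y \in F)) => [yF|ynF]; first by rewrite adj_sym in xy; rewrite (inN y x yF xy).
case: (boolP (x \in outer_nbhd F)) => [//|xnN]; case: (boolP (y \in outer_nbhd F)) => [_|ynN].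
  by rewrite orbT.
have := covH x y; rewrite /induced xy !in_setC !in_setU.
rewrite (negbTE xnF) (negbTE ynF) (negbTE xnN) (negbTE ynN) => /(_ isT).
by case/orP => ->; rewrite ?orbT.
Qed.

Lemma large_bmatching_indep m t F v side :
  v \in F -> bipartite side (induced adj (~: closed_nbhd v)) ->
  {in F &, forall x y, ~~ adj x y} ->
  (forall C, is_cover adj C -> [disjoint C & F] -> t <= weight m C) ->
  exists L, size L = t /\ bmatching adj (fun u => m u + (u \in F) * t) L.
Proof.
move=> vF bip indep heavy; set N := outer_nbhd F.
have subW : ~: (F :|: N) \subset ~: closed_nbhd v.
  apply/subsetP => x; rewrite !in_setC in_setU negb_or => /andP [xnF xnN].
  rewrite inE negb_or; apply/andP; split; first by apply: contraNneq xnF => ->.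
  by apply: contra xnN => vx; rewrite inE xnF; apply/exists_inP; exists v.
have [LH [CH [[edH degH] covH szH]]] := bipartite_konig m (bipartite_subset subW bip).
have hasF y : y \in N -> exists2 x, x \in F & adj y x.
  by rewrite inE => /andP [_ /exists_inP [x xF xy]]; exists x; rewrite // adj_sym.
have [L1 [szL1 ed1 deg1]] := star_bmatching m hasF.
have disj : [disjoint N :|: (CH :\: F) & F].
  by rewrite disjoints_subset; apply/subsetP => x; rewrite !inE => /orP [] /andP [].
have le_t : t <= size L1 + size LH.
  have := heavy _ (outer_nbhd_cover indep covH) disj.
  have := weightU m N (CH :\: F); have := weight_subset m (subsetDl CH F); rewrite -/N; lia.
have edges : all (fun p => adj p.1 p.2) (take t (L1 ++ LH)).
  apply/allP => p /mem_take; rewrite mem_cat => /orP [] pL; first exact: (allP ed1).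
  by have /and3P [] := allP edH p pL.
exists (take t (L1 ++ LH)); split; first by rewrite size_takel // size_cat.
split=> // u; case: (boolP (u \in F)) => uF.
  apply: leq_trans (degree_le_size u (sub_all (fun p => @adj_neq p.1 p.2) edges)) _.
  by rewrite mul1n size_take size_cat; case: ltnP; lia.
apply: leq_trans (degree_take u t _) _; rewrite degree_cat deg1 // mul0n addn0.
case: (boolP (u \in N)) => uN; last by rewrite mul0n add0n.
rewrite mul1n degree_eq0 ?addn0 //; apply/allP => p /(allP edH) /and3P [_ p1 p2].
by apply/andP; split; [move: p1 | move: p2];
  rewrite in_setC in_setU negb_or => /andP [_]; apply: contraNneq => ->.
Qed.

Lemma large_bmatching m t F :
  (forall v, v \in F -> exists side, bipartite side (induced adj (~: closed_nbhd v))) ->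
  F != set0 ->
  (forall C, is_cover adj C -> [disjoint C & F] -> t <= weight m C) ->
  exists L, size L = t /\ bmatching adj (fun u => m u + (u \in F) * t) L.
Proof.
move=> bipF /set0Pn [v vF] heavy.
have [/exists_inP [x xF /exists_inP [y yF xy]]|indep] :=
  boolP [exists x in F, exists y in F, adj x y]; last first.
  have [side bip] := bipF v vF; apply: large_bmatching_indep vF bip _ heavy.
  move=> x y xF yF; apply: contra indep => xy.
  by apply/exists_inP; exists x => //; apply/exists_inP; exists y.
exists (nseq t (x, y)); split; first by rewrite size_nseq.
split=> [|u]; first by rewrite all_nseq /= xy orbT.
rewrite degree_nseq /=; case: (eqVneq x u) => [<-|_].
  by rewrite xF eq_sym (negbTE (adj_neq xy)); lia.
by case: (eqVneq y u) => [<-|_]; rewrite ?yF /=; lia.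
Qed.

End LargeBMatching.

(** * Cubic circulant graphs *)

Lemma natdistC i j : natdist i j = natdist j i.
Proof. by rewrite /natdist; case: ltngtP => // ->. Qed.

Lemma circ_adj_sym n a : symmetric (circ_adj n a).
Proof. by move=> x y; rewrite /circ_adj natdistC eq_sym. Qed.

Lemma circ_adj_irr n a : irreflexive (circ_adj n a).
Proof. by move=> x; rewrite /circ_adj eqxx. Qed.

Lemma connected_circ_coprime n a : a < n -> graph_connected (circ_adj n a) -> coprime a n.
Proof.
move=> a_lt_n conn; set g := gcdn a n.
have g_dvd_dist d : [|| d == a, d == n | d == 2 * n - a] -> g %| d.
  by case/or3P => /eqP ->; rewrite ?dvdn_sub ?dvdn_mull ?dvdn_gcdl ?dvdn_gcdr.
have closed_mod : closed (circ_adj n a) [pred z : 'I_(2 * n) | g %| z].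
  move=> x y /andP [_ /g_dvd_dist]; rewrite /natdist; case: leqP => [xy|/ltnW yx] g_dvd.
    by rewrite !inE -(subnK xy) dvdn_addr.
  by rewrite !inE -(subnK yx) dvdn_addr.
have n2_gt1 : 1 < 2 * n by lia.
have := closed_connect closed_mod (conn (Ordinal (ltnW n2_gt1)) (Ordinal n2_gt1)).
by rewrite !inE /= dvdn0 /coprime dvdn1 => /esym.
Qed.

Local Open Scope ring_scope.

Lemma circ_adj_diff n a (x y : 'I_(2 * n)) : (a <= 2 * n)%N -> circ_adj n a x y ->
  exists s q : int, (s = 1 \/ s = -1) /\
    (y%:Z - x%:Z = s * a%:Z + (2 * n)%N%:Z * q \/ y%:Z - x%:Z = s * n%:Z + (2 * n)%N%:Z * q).
Proof.
move=> a_le /andP [_]; rewrite /natdist; case: leqP => xy /or3P [] /eqnP d.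
- by exists 1, 0; lia.
- by exists 1, 0; lia.
- by exists (-1), 1; lia.
- by exists (-1), 0; lia.
- by exists (-1), 0; lia.
- by exists 1, (-1); lia.
Qed.

Lemma coprime_circ_relation n a (d k q : int) : (0 < n)%N -> coprime a n ->
  a%:Z * d + n%:Z * k = (2 * n)%N%:Z * q -> - n%:Z < d < n%:Z -> d = 0 /\ k = 2 * q.
Proof.
move=> n_gt0 cop E /andP [d_gt d_lt].
have n_dvd_d : (n %| `|d|)%N.
  rewrite -(@Gauss_dvdr n a) 1?coprime_sym //.
  have -> : (a * `|d|)%N = absz (a%:Z * d) by rewrite abszM.
  have -> : a%:Z * d = n%:Z * (2 * q - k) by lia.
  by rewrite abszM dvdn_mulr.
have d0 : d = 0.
  case: (posnP `|d|) => [/eqP|/dvdn_leq /(_ n_dvd_d)]; first by rewrite absz_eq0 => /eqP.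
  by lia.
by split => //; subst d; apply: (@mulfI _ n%:Z); lia.
Qed.

Section CirculantBipartite.
Variables (n a : nat).
Hypotheses (a_lt_n : (a < n)%N) (coprime_an : coprime a n).
Variable v : 'I_(2 * n).

Let n_gt0 : (0 < n)%N. Proof. lia. Qed.
Let n2_gt0 : (0 < 2 * n)%N. Proof. lia. Qed.
Let a_le_n2 : (a <= 2 * n)%N. Proof. lia. Qed.

(* [circ_coord (p, e)] is [v + a p + e n] mod [2n]. As [a] and [n] are coprime these *)
(* coordinates enumerate the vertices, and away from [p = 0] an [a]-edge changes [p] by *)
(* one while an [n]-edge flips [e]; the vertices with [p = 0] are [v] and [v + n], so *)
(* the parity of [p + e] 2-colours the graph once the neighbourhood of [v] is removed. *)
Definition circ_coord (pe : 'I_n * bool) : 'I_(2 * n) :=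
  Ordinal (ltn_pmod (v + a * pe.1 + pe.2 * n)%N n2_gt0).

Lemma circ_coordE p e : exists Q : int,
  (circ_coord (p, e))%:Z = v%:Z + a%:Z * p%:Z + (e : nat)%:Z * n%:Z - (2 * n)%N%:Z * Q.
Proof.
exists ((v + a * p + e * n) %/ (2 * n))%N%:Z.
by have := divn_eq (v + a * p + e * n) (2 * n); rewrite /=; lia.
Qed.

Lemma circ_coord_inj : injective circ_coord.
Proof.
move=> [p e] [p' e'] /(congr1 (fun x : 'I_(2 * n) => x%:Z)) E.
have [Q EQ] := circ_coordE p e; have [Q' EQ'] := circ_coordE p' e'.
have lt_p := ltn_ord p; have lt_p' := ltn_ord p'.
have [p_eq e_eq] : p%:Z - p'%:Z = 0 /\ e%:Z - e'%:Z = 2 * (Q - Q').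
  by apply: (coprime_circ_relation n_gt0 coprime_an); lia.
have -> : p = p' by apply: ord_inj; lia.
by case: e e' e_eq {E EQ EQ'} => [] [] //=; lia.
Qed.

Lemma circ_coord_bij : bijective circ_coord.
Proof.
by apply: inj_card_bij circ_coord_inj _; rewrite card_prod !card_ord card_bool mulnC.
Qed.

Lemma circ_coord0 (pe : 'I_n * bool) :
  pe.1 = 0%N :> nat -> circ_coord pe \in closed_nbhd (circ_adj n a) v.
Proof.
case: pe => p e /= p0; have lt_v := ltn_ord v.
have xE : circ_coord (p, e) = (if e then (if v < n then v + n else v - n) else v)%N :> nat.
  rewrite /= p0 muln0 addn0; case: e; last by rewrite mul0n addn0 modn_small.
  rewrite mul1n; case: ltnP => hv; first by rewrite modn_small //; lia.
  have -> : (v + n = v - n + 2 * n)%N by lia.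
  by rewrite modnDr modn_small //; lia.
move: (circ_coord _) xE => x xE; rewrite inE /circ_adj /natdist -!val_eqE /= xE {x xE}.
by case: e; case: ltnP => hv; rewrite ?eqxx //=; case: leqP; lia.
Qed.

Lemma circ_bipartite_off_nbhd :
  exists side, bipartite side (induced (circ_adj n a) (~: closed_nbhd (circ_adj n a) v)).
Proof.
have [coord_inv coordK coord_invK] := circ_coord_bij.
exists (fun x => odd ((coord_inv x).1 + (coord_inv x).2)) => x y.
rewrite -(coord_invK x) -(coord_invK y) !coordK.
case: (coord_inv x) (coord_inv y) => [p e] [p' e'] /and3P [xy].
have coord_pos pe : circ_coord pe \in ~: closed_nbhd (circ_adj n a) v -> (0 < pe.1)%N.
  by rewrite in_setC lt0n; apply: contra => /eqP /circ_coord0.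
move=> /coord_pos /= p_gt0 /coord_pos /= p'_gt0.
have [Q EQ] := circ_coordE p e; have [Q' EQ'] := circ_coordE p' e'.
have lt_p := ltn_ord p; have lt_p' := ltn_ord p'.
have [s [q [s1 [da|dn]]]] := circ_adj_diff a_le_n2 xy.
- have [d0 k2] : p'%:Z - p%:Z - s = 0 /\ e'%:Z - e%:Z = 2 * (q + Q' - Q).
    by apply: (coprime_circ_relation n_gt0 coprime_an); lia.
  by clear -k2 d0 s1; move: k2; case: e; case: e' => /=; lia.
- have [d0 k2] : p'%:Z - p%:Z = 0 /\ e'%:Z - e%:Z - s = 2 * (q + Q' - Q).
    by apply: (coprime_circ_relation n_gt0 coprime_an); lia.
  by clear -k2 d0 s1; move: k2; case: e; case: e' => /=; lia.
Qed.

End CirculantBipartite.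

(** * Edge ideals and their minimal primes *)

Section Ideals.
Variable R : comNzRingType.
Implicit Types (S Q I J : R -> Prop) (f g c X : R).

Lemma ideal_sum Q (T : eqType) (s : seq T) (F : T -> R) :
  is_ideal Q -> (forall i, i \in s -> Q (F i)) -> Q (\sum_(i <- s) F i).
Proof.
move=> [Q0 [QD _]]; elim: s => [|i s IH] Fs; rewrite ?big_nil ?big_cons //.
by apply: QD; [apply: Fs; rewrite mem_head | apply: IH => j js; apply: Fs; rewrite inE js orbT].
Qed.

Lemma mem_gen_ideal S f : S f -> gen_ideal S f.
Proof. by exists [:: (1, f)]; rewrite big_seq1 mul1r; split=> // p; rewrite inE => /eqP ->. Qed.

Lemma gen_ideal_is_ideal S : is_ideal (gen_ideal S).
Proof.
split; first by exists [::]; rewrite big_nil.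
split=> [f g [r1 [S1 ->]] [r2 [S2 ->]] | c f [r [Sr ->]]].
  by exists (r1 ++ r2); rewrite big_cat; split=> // p; rewrite mem_cat => /orP [/S1|/S2].
exists [seq (c * p.1, p.2) | p <- r]; split; first by move=> p /mapP [q /Sr ? ->].
by rewrite big_map mulr_sumr; apply: eq_bigr => p _; rewrite mulrA.
Qed.

Lemma gen_ideal_min S Q : is_ideal Q -> (forall f, S f -> Q f) ->
  forall f, gen_ideal S f -> Q f.
Proof.
move=> idQ SQ f [r [Sr ->]]; apply: (ideal_sum idQ) => p pr.
by have [_ [_ QM]] := idQ; apply/QM/SQ/Sr.
Qed.

Lemma ideal_powS I J t : (forall f, I f -> J f) -> forall f, ideal_pow I t f -> ideal_pow J t f.
Proof.
move=> IJ; apply: gen_ideal_min (gen_ideal_is_ideal _) _ => g [s [sz [Is ->]]].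
by apply: mem_gen_ideal; exists s; split=> //; split=> // h /Is /IJ.
Qed.

Lemma ideal_pow_sub_symb_pow I t f : ideal_pow I t f -> symb_pow I t f.
Proof. by move=> If P [_ [IP _]]; apply: (ideal_powS IP). Qed.

(* If [f^i X] and [g^j X] lie in the ideal, every term of the binomial expansion of *)
(* [(f + g)^(i + j) X] is a multiple of one of them. *)
Lemma rad_colon_is_ideal S X : is_ideal (ideal_rad (ideal_colon (gen_ideal S) X)).
Proof.
have [I0 [_ IM]] := gen_ideal_is_ideal S.
split; first by exists 1%N; rewrite /ideal_colon expr1 mul0r.
split=> [f g [i fi] [j gj] | c f [i fi]]; last first.
  by exists i; rewrite /ideal_colon exprMn -mulrA; apply: IM.
exists (i + j)%N; rewrite /ideal_colon exprDn mulr_suml.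
apply: (ideal_sum (gen_ideal_is_ideal S)) => l _; rewrite mulrnAl -mulr_natl; apply: (IM _).
have [jl|lj] := leqP j l.
  have -> : g ^+ l = g ^+ (l - j) * g ^+ j by rewrite -exprD subnK.
  by rewrite -!mulrA; do 2 apply: (IM _).
have -> : f ^+ (i + j - l) = f ^+ (i + j - l - i) * f ^+ i by rewrite -exprD subnK //; lia.
by rewrite -!mulrA; apply: (IM _); rewrite mulrCA; apply: (IM _).
Qed.

Lemma ideal_pow_mul P t g f : P g -> ideal_pow P t f -> ideal_pow P t.+1 (g * f).
Proof.
move=> Pg; have [I0 [ID IM]] := gen_ideal_is_ideal
  (fun h => exists s, size s = t.+1 /\ (forall g, g \in s -> P g) /\ h = \prod_(g <- s) g).
apply: (gen_ideal_min (Q := fun f => ideal_pow P t.+1 (g * f))) f => [|_ [s [sz [Ps ->]]]].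
  split; first by rewrite mulr0.
  split=> [f h fP hP | c f fP]; first by rewrite mulrDr; apply: ID.
  by rewrite mulrCA; apply: IM.
apply: mem_gen_ideal; exists (g :: s); rewrite big_cons /= sz; split=> //; split=> // h.
by rewrite inE => /orP [/eqP -> | /Ps].
Qed.

End Ideals.

Section MonomialPrimes.
Variables (k : fieldType) (N : nat).
Local Notation R := {mpoly k[N]}.
Implicit Types (C D : {set 'I_N}) (u m : 'X_{1..N}) (f g p : R).

Lemma mpolyX_neq0 u : 'X_[u] != 0 :> R.
Proof.
by apply/eqP => /(congr1 (mcoeff u)); rewrite mcoeffX eqxx mcoeff0 => /eqP; rewrite oner_eq0.
Qed.

Lemma ideal_pow_monomial (P : R -> Prop) t (us : seq 'X_{1..N}) b :
  size us = t -> (forall u, u \in us -> P 'X_[u]) -> (\sum_(u <- us) u <= b)%MM ->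
  ideal_pow P t 'X_[b].
Proof.
move=> sz Pus le_b; rewrite -(submK le_b) mpolyXD.
apply: (gen_ideal_is_ideal _).2.2; apply: mem_gen_ideal.
exists [seq 'X_[u] | u <- us]; rewrite size_map big_map mpolyX_prod.
by split=> //; split=> // g /mapP [u /Pus ? ->].
Qed.

(* [grade C p] multiplies each variable of [C] by the variable [T] of [{poly R}]: the *)
(* coefficient of [T^d] is the part of [p] of degree [d] in the variables of [C], and *)
(* the constant term [kill_vars C p] is [p] with these variables set to zero. *)
Definition grade C : {rmorphism R -> {poly R}} :=
  mmap (polyC \o @mpolyC N k)
    (fun i => if i \in C then 'X * ('X_i)%:P else ('X_i)%:P : {poly R}).

Lemma gradeX C u : grade C 'X_[u] = 'X ^+ weight u C * ('X_[u])%:P.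
Proof.
rewrite /grade /= mmapX /mmap1.
rewrite (eq_bigr (fun i => 'X ^+ ((i \in C) * u i)%N * ('X_i)%:P ^+ u i)); last first.
  by move=> i _; case: (i \in C); rewrite ?mul1n ?mul0n ?exprMn ?expr0 ?mul1r.
rewrite big_split /= prodrXr mpolyXE_id rmorph_prod /=; congr (_ ^+ _ * _).
  by rewrite /weight [RHS]big_mkcond; apply: eq_bigr => i _; case: (i \in C); rewrite ?mul1n.
by apply: eq_bigr => i _; rewrite rmorphXn.
Qed.

Definition kill_vars C : {rmorphism R -> R} := horner_eval 0 \o grade C.

Lemma kill_varsE C p : kill_vars C p = (grade C p).[0].
Proof. by []. Qed.

Lemma kill_varsX C u : kill_vars C 'X_[u] = if weight u C == 0%N then 'X_[u] else 0.
Proof.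
rewrite kill_varsE gradeX hornerM hornerXn hornerC expr0n.
by case: (weight u C == 0%N); rewrite ?mul1r ?mul0r.
Qed.

Lemma kill_varsZ C c p : kill_vars C (c *: p) = c *: kill_vars C p.
Proof.
by rewrite -!mul_mpolyC rmorphM; congr (_ * _); rewrite kill_varsE /grade /= mmapC hornerC.
Qed.

Lemma mcoeff_kill_vars C p u :
  (kill_vars C p)@_u = if weight u C == 0%N then p@_u else 0.
Proof.
elim/mpolyind: p => [|c v p _ _ IH]; first by rewrite rmorph0 mcoeff0; case: ifP.
rewrite rmorphD kill_varsZ kill_varsX !mcoeffD !mcoeffZ IH mcoeffX.
case: (eqVneq v u) => [<-|vu].
  by case: (weight v C == 0%N); rewrite ?mcoeffX ?eqxx ?mcoeff0 ?mulr0 ?addr0.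
by case: (weight v C == 0%N); case: (weight u C == 0%N);
  rewrite ?mcoeffX ?(negbTE vu) ?mcoeff0 ?mulr0 ?add0r ?addr0.
Qed.

Lemma kill_vars_prime C : is_prime_ideal (fun g => kill_vars C g = 0).
Proof.
split; first split; first exact: rmorph0.
  by split=> [f g f0 g0 | c f f0]; rewrite ?rmorphD ?rmorphM f0 ?g0 ?addr0 ?mulr0.
split; first by rewrite rmorph1; apply/eqP; rewrite oner_eq0.
by move=> f g /eqP; rewrite rmorphM mulf_eq0 => /orP [] /eqP; [left | right].
Qed.

Lemma kill_vars0_msupp C f u :
  kill_vars C f = 0 -> u \in msupp f -> exists2 i, i \in C & (0 < u i)%N.
Proof.
move=> f0 uf; have := mcoeff_kill_vars C f u; rewrite f0 mcoeff0.
case: eqP => [_|/eqP]; first by move/eqP; rewrite eq_sym mcoeff_eq0 uf.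
rewrite /weight sum_nat_eq0 => /forall_inPn [i iC ui] _.
by exists i; rewrite // lt0n.
Qed.

Lemma grade_kill_vars0 C g : kill_vars C g = 0 -> exists q, grade C g = q * 'X.
Proof.
move=> g0; have : root (grade C g) 0 by rewrite /root -kill_varsE g0.
by case/factor_theorem => q ->; exists q; rewrite subr0.
Qed.

Lemma grade_ideal_pow C t h :
  ideal_pow (fun g => kill_vars C g = 0) t h -> exists q, grade C h = 'X ^+ t * q.
Proof.
apply: (gen_ideal_min (Q := fun h => exists q, grade C h = 'X ^+ t * q)) h
  => [|g [s [<- [s0 ->]]]].
  split; first by exists 0; rewrite rmorph0 mulr0.
  split=> [f g [q fq] [q' gq] | c f [q fq]].
    by exists (q + q'); rewrite rmorphD fq gq mulrDr.
  by exists (grade C c * q); rewrite rmorphM fq mulrCA.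
elim: s s0 {g} => [|g s IH] s0; first by exists 1; rewrite big_nil rmorph1 mulr1.
have [q gq] := grade_kill_vars0 (s0 g (mem_head g s)).
have [|q' sq'] := IH; first by move=> h hs; apply: s0; rewrite inE hs orbT.
by exists (q * q'); rewrite big_cons rmorphM gq sq' exprS; ring.
Qed.

(* After [grade C] the left-hand side is divisible by [T^t], while [x^m] only accounts *)
(* for [T^(weight m C)] with [weight m C < t]: hence [T] divides [grade C f]. *)
Lemma kill_vars_colon C t M f m :
  ideal_pow (fun g => kill_vars C g = 0) t (f ^+ M * 'X_[m]) ->
  (weight m C < t)%N -> kill_vars C f = 0.
Proof.
move=> /grade_ideal_pow [q]; rewrite rmorphM rmorphXn gradeX => fq lt_mt.
set r := grade C f ^+ M * ('X_[m])%:P.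
have rq : r = 'X ^+ (t - weight m C) * q.
  apply: (@mulfI _ ('X ^+ weight m C)); first by rewrite expf_neq0 ?polyX_eq0.
  by rewrite /r mulrCA fq mulrA -exprD subnKC // ltnW.
have : r.[0] = 0 by rewrite rq hornerM hornerXn expr0n subn_eq0 leqNgt lt_mt mul0r.
rewrite /r hornerM horner_exp hornerC -kill_varsE => /eqP.
by rewrite mulf_eq0 (negbTE (mpolyX_neq0 m)) orbF expf_eq0 => /andP [_ /eqP].
Qed.

Lemma kill_vars_var C i : kill_vars C 'X_i = if i \in C then 0 else 'X_i.
Proof.
rewrite kill_varsX; case: (boolP (i \in C)) => iC.
  by rewrite (weightD1 _ iC) mnm1E eqxx add1n.
by rewrite /weight big1 // => j jC; rewrite mnm1E; case: eqP jC => // <-; rewrite (negbTE iC).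
Qed.

Variable adj : rel 'I_N.

Definition edge_ideal : R -> Prop := gen_ideal (fun f => exists i j, adj i j /\ f = 'X_i * 'X_j).

Lemma edge_ideal_kill_vars C : is_cover adj C -> forall f, edge_ideal f -> kill_vars C f = 0.
Proof.
move=> /coverP cov; apply: gen_ideal_min (kill_vars_prime C).1 _ => _ [i [j [ij ->]]].
by rewrite rmorphM !kill_vars_var; case/orP: (cov i j ij) => ->; rewrite ?mul0r ?mulr0.
Qed.

Lemma prime_vars_cover P : is_prime_ideal P -> (forall f, edge_ideal f -> P f) ->
  is_cover adj [set i | `[< P 'X_i >]].
Proof.
move=> [_ [_ Pprime]] IP; apply/coverP => i j ij; rewrite !inE.
have : P ('X_i * 'X_j) by apply/IP/mem_gen_ideal; exists i, j.
by case/Pprime => /asboolP ->; rewrite ?orbT.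
Qed.

Lemma minimal_prime_kill_vars C :
  minset (is_cover adj) C -> minimal_prime edge_ideal (fun g => kill_vars C g = 0).
Proof.
move=> /minsetP [covC minC]; split; first exact: kill_vars_prime.
split=> [|Q Qprime IQ QC]; first exact: edge_ideal_kill_vars.
have [[_ [_ QM]] _] := Qprime.
have DC : [set i | `[< Q 'X_i >]] \subset C.
  apply/subsetP => i; rewrite inE => /asboolP /QC; rewrite kill_vars_var.
  by case: (i \in C) => // /eqP; rewrite (negbTE (mpolyX_neq0 _)).
have CD := minC _ (prime_vars_cover Qprime IQ) DC.
move=> f f0; rewrite (mpolyE f); apply: (ideal_sum Qprime.1) => u uf.
have [i iC ui] := kill_vars0_msupp f0 uf.
have Qi : Q 'X_i by move: iC; rewrite -CD inE => /asboolP.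
have le_iu : (U_(i) <= u)%MM by rewrite lep1mP -lt0n.
by rewrite -mul_mpolyC -(submK le_iu) mpolyXD; apply: (QM _); apply: (QM _).
Qed.

Lemma ideal_pow_vars (P : R -> Prop) D t m :
  (forall i, i \in D -> P 'X_i) -> (t <= weight m D)%N -> ideal_pow P t 'X_[m].
Proof.
move=> PD; elim: t m => [|t IH] m le_tm.
  by apply: (@ideal_pow_monomial _ _ [::]); rewrite ?big_nil //; apply/mnm_lepP => i; rewrite mnm0E.
have [i iD mi] : exists2 i, i \in D & (0 < m i)%N.
  apply/exists_inP; apply: contraTT le_tm; rewrite negb_exists_in -ltnNge => /forall_inP m0.
  by rewrite /weight big1 // => i /m0; rewrite -eqn0Ngt => /eqP.
have le_im : (U_(i) <= m)%MM by rewrite lep1mP -lt0n.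
rewrite -(submK le_im) mpolyXD mulrC; apply: ideal_pow_mul (PD i iD) (IH _ _).
move: le_tm; rewrite !(weightD1 _ iD) mnmBE mnm1E eqxx /=.
have -> : weight (m - U_(i))%MM (D :\ i) = weight m (D :\ i).
  by apply: eq_bigr => j /setD1P [ji _]; rewrite mnmBE mnm1E eq_sym (negbTE ji) subn0.
rewrite -[weight m _]/(weight m (D :\ i)); lia.
Qed.

Lemma symb_pow_colon_cover t M f m u C :
  symb_pow edge_ideal t (f ^+ M * 'X_[m]) -> u \in msupp f -> is_cover adj C ->
  (weight m C < t)%N -> exists2 i, i \in C & (0 < u i)%N.
Proof.
move=> symb uf covC lt_mt; have [C' minC' subC] := minset_exists covC.
have lt' : (weight m C' < t)%N by apply: leq_ltn_trans (weight_subset m subC) lt_mt.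
have f0 := kill_vars_colon (symb _ (minimal_prime_kill_vars minC')) lt'.
have [i iC' ui] := kill_vars0_msupp f0 uf.
by exists i => //; apply: (subsetP subC).
Qed.

Lemma not_symb_pow_cover t m :
  ~ symb_pow edge_ideal t 'X_[m] -> exists2 C, is_cover adj C & (weight m C < t)%N.
Proof.
move=> /existsNP [P /not_implyP [[Pprime [IP _]] notP]].
exists [set i | `[< P 'X_i >]]; first exact: prime_vars_cover.
rewrite ltnNge; apply/negP => le; apply: notP; apply: ideal_pow_vars le => i.
by rewrite inE => /asboolP.
Qed.

Lemma edge_ideal_pow_bmatching t (L : seq ('I_N * 'I_N)) (b : 'X_{1..N}) :
  size L = t -> bmatching adj (fun j => b j) L -> ideal_pow edge_ideal t 'X_[b].
Proof.
move=> sz [edges deg]; apply: (@ideal_pow_monomial _ _ [seq (U_(e.1) + U_(e.2))%MM | e <- L]).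
- by rewrite size_map.
- move=> _ /mapP [e eL ->]; rewrite mpolyXD; apply: mem_gen_ideal.
  by exists e.1, e.2; split=> //; apply: (allP edges).
- apply/mnm_lepP => j; rewrite big_map; apply: leq_trans (deg j).
  elim: {sz edges deg} L => [|e L IH]; rewrite ?big_nil ?big_cons ?mnm0E //.
  by rewrite !mnmDE !mnm1E degree_cons leq_add2l.
Qed.

End MonomialPrimes.

Arguments edge_ideal k {N} adj.

Section LocallyBipartiteGraphs.
Variables (k : fieldType) (N : nat) (adj : rel 'I_N).
Hypotheses (adj_sym : symmetric adj) (adj_irr : irreflexive adj).
Hypothesis nbhd_bipartite :
  forall v, exists side, bipartite side (induced adj (~: closed_nbhd adj v)).
Local Notation I := (edge_ideal k adj).

Lemma monomial_pow_colon t M f m u :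
  ~ symb_pow I t 'X_[m] -> symb_pow I t (f ^+ M * 'X_[m]) -> u \in msupp f ->
  ideal_pow I t ('X_[u] ^+ t * 'X_[m]).
Proof.
move=> notin fM uf; set F := [set i | (0 < u i)%N].
have heavy C : is_cover adj C -> [disjoint C & F] -> (t <= weight m C)%N.
  move=> covC disj; rewrite leqNgt; apply/negP => /(symb_pow_colon_cover fM uf covC) [i iC ui].
  by move: disj; rewrite disjoints_subset => /subsetP /(_ i iC); rewrite !inE ui.
have F_neq0 : F != set0.
  have [C0 covC0 lightC0] := not_symb_pow_cover notin.
  by have [i _ ui] := symb_pow_colon_cover fM uf covC0 lightC0; apply/set0Pn; exists i; rewrite inE.
have [L [sizeL bmL]] := large_bmatching adj_sym adj_irr (fun v _ => nbhd_bipartite v) F_neq0 heavy.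
rewrite mpolyXn -mpolyXD; apply: edge_ideal_pow_bmatching sizeL _.
apply: (bmatchingW bmL) => j; rewrite mnmDE mulmnE inE.
by case: (ltnP 0 (u j)) => uj /=; nia.
Qed.

Lemma rad_colon_symb_pow t m : ~ symb_pow I t 'X_[m] -> forall f,
  ideal_rad (ideal_colon (symb_pow I t) 'X_[m]) f ->
  ideal_rad (ideal_colon (ideal_pow I t) 'X_[m]) f.
Proof.
move=> notin f [M fM].
have RC : is_ideal (ideal_rad (ideal_colon (ideal_pow I t) 'X_[m])) by exact: rad_colon_is_ideal.
rewrite (mpolyE f); apply: (ideal_sum RC) => u uf; rewrite -mul_mpolyC; apply: RC.2.2.
by exists t; apply: monomial_pow_colon fM uf.
Qed.

End LocallyBipartiteGraphs.

Theorem lemma4p2 (k : fieldType) (n a : nat) (t : nat) (m : expvec (2 * n)) :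
  (1 <= a)%N -> (a < n)%N ->
  graph_connected (circ_adj n a) ->
  (1 <= t)%N ->
  ~ symb_pow (edge_ideal_circ k n a) t 'X_[m] ->
  forall f : {mpoly k[2 * n]},
    ideal_rad (ideal_colon (ideal_pow (edge_ideal_circ k n a) t) 'X_[m]) f <->
    ideal_rad (ideal_colon (symb_pow (edge_ideal_circ k n a) t) 'X_[m]) f.
Proof.
move=> _ a_lt_n conn _ notin f.
change (edge_ideal_circ k n a) with (edge_ideal k (circ_adj n a)) in notin |- *.
split=> [[M fM]|]; first by exists M; apply: ideal_pow_sub_symb_pow.
apply: rad_colon_symb_pow notin f => [||v]; [exact: circ_adj_sym | exact: circ_adj_irr |].
exact: circ_bipartite_off_nbhd a_lt_n (connected_circ_coprime a_lt_n conn) v.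
Qed.
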